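(* Let $(W,V)$ be an independent-type $\mathcal Y$-valued transition matrix on $\mathcal X$ with $W$ irreducible, and $P$ a distribution on $\mathcal X$. Then $$\mathcal L^I_{2,W,V}=\big\{([W,A],C)\in\mathcal G^I:\ A\in M_d(\mathbb R),\ A^Tu_{\mathcal X}=0,\ W[D(V_y),A]=WD(C_y)\ \forall y\in\mathcal Y\big\},$$ $$\mathcal L^I_{2,P,W,V}=\big\{([W,A],C)\in\mathcal G^I:\ A\in M_d(\mathbb R),\ A^Tu_{\mathcal X}=0,\ AP=0,\ W[D(V_y),A]=WD(C_y)\ \forall y\in\mathcal Y\big\},$$ where $[X,Y]=XY-YX$.
   Context: Let $\mathcal X=\{1,\dots,d\}$, $\mathcal Y=\{1,\dots,d_Y\}$, $u_{\mathcal X}\in\mathbb R^{\mathcal X}$ the all-ones vector. An independent-type $\mathcal Y$-valued transition matrix $(W,V)$ consists of a column-stochastic $d\times d$ matrix $W(x|x')$ and a transition matrix $V$ from $\mathcal X$ to $\mathcal Y$ ($V(y|x')\ge0$, $\sum_yV(y|x')=1$), defining $W_y:=WD(V_y)$, where $V_y\in\mathbb R^{\mathcal X}$, $V_y(x')=V(y|x')$, and $D(v)$ is the diagonal matrix with diagonal $v$. $\mathcal G^I$ is the set of pairs $(B,C)$ with $B$ a real $d\times d$ matrix vanishing wherever $W(x|x')=0$ and $C=(C_y)_{y\in\mathcal Y}$, $C_y\in\mathbb R^{\mathcal X}$, $C_y(x')=0$ wherever $V(y|x')=0$. $\mathcal L^I_{1,W,V}:=\{(B,C)\in\mathcal G^I: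 B^Tu_{\mathcal X}=0,\ \sum_yC_y=0\}$. Let $\mathcal L_2:=\{(W_yA-AW_y)_{y\in\mathcal Y}: A\in M_d(\mathbb R),\ A^Tu_{\mathcal X}=0\}$ and $\mathcal L_{2,P}:=\{(W_yA-AW_y)_{y}: A^Tu_{\mathcal X}=0,\ AP=0\}$. Then $\mathcal L^I_{2,W,V}:=\{(B,C)\in\mathcal L^I_{1,W,V}: (BD(V_y)+WD(C_y))_{y}\in\mathcal L_2\}$ and $\mathcal L^I_{2,P,W,V}:=\{(B,C)\in\mathcal L^I_{1,W,V}:(BD(V_y)+WD(C_y))_y\in\mathcal L_{2,P}\}$. *)

From HB Require Import structures.
From mathcomp Require Import all_boot all_order all_algebra.
Set Implicit Arguments. Unset Strict Implicit. Unset Printing Implicit Defensive.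
Import Order.TTheory GRing.Theory Num.Theory.
Local Open Scope ring_scope.

Section Defs.
Variables (R : realFieldType) (d dY : nat).

(* Convention: W x x' = W(x|x') (row = output, column = input). *)
Definition col_stochastic (W : 'M[R]_d) : Prop :=
  (forall x x', 0 <= W x x') /\ (forall x', \sum_x W x x' = 1).

(* V y x' = V(y|x') *)
Definition transition_mx (V : 'M[R]_(dY, d)) : Prop :=
  (forall y x', 0 <= V y x') /\ (forall x', \sum_y V y x' = 1).

Definition irreducible_mx (W : 'M[R]_d) : Prop :=
  forall x x' : 'I_d, exists n : nat, 0 < (W ^+ n) x x'.

Definition distribution (P : 'cV[R]_d) : Prop :=
  (forall x, 0 <= P x ord0) /\ \sum_x P x ord0 = 1.

Definition uX : 'cV[R]_d := const_mx 1.

Definition DV (V : 'M[R]_(dY, d)) (y : 'I_dY) : 'M[R]_d := diag_mx (row y V).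

Definition Wy (W : 'M[R]_d) (V : 'M[R]_(dY, d)) (y : 'I_dY) : 'M[R]_d :=
  W *m DV V y.

Definition commr (X Y : 'M[R]_d) : 'M[R]_d := X *m Y - Y *m X.

(* (B, C) \in G^I ; C is stored as the matrix whose row y is C_y *)
Definition inGI (W : 'M[R]_d) (V : 'M[R]_(dY, d)) (B : 'M[R]_d) (C : 'M[R]_(dY, d)) : Prop :=
  (forall x x', W x x' = 0 -> B x x' = 0) /\ (forall y x', V y x' = 0 -> C y x' = 0).

Definition inL1 W V B C : Prop :=
  inGI W V B C /\ B^T *m uX = 0 /\ \sum_y row y C = 0.

(* (B D(V_y) + W D(C_y))_y \in L_2 *)
Definition inL2 W V B C : Prop :=
  inL1 W V B C /\
  exists A : 'M[R]_d, A^T *m uX = 0 /\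
    forall y, B *m DV V y + W *m diag_mx (row y C) = commr (Wy W V y) A.

(* (B D(V_y) + W D(C_y))_y \in L_{2,P} *)
Definition inL2P W V (P : 'cV[R]_d) B C : Prop :=
  inL1 W V B C /\
  exists A : 'M[R]_d, A^T *m uX = 0 /\ A *m P = 0 /\
    forall y, B *m DV V y + W *m diag_mx (row y C) = commr (Wy W V y) A.

End Defs.

From HB Require Import structures.
From mathcomp Require Import all_boot all_order all_algebra.
Import Order.TTheory GRing.Theory Num.Theory.
Set Implicit Arguments. Unset Strict Implicit.
Local Open Scope ring_scope.

(* Summing the defining identities B D(V_y) + W D(C_y) = [W D(V_y), A] over y,
   and using sum_y D(V_y) = 1 and sum_y C_y = 0, forces B = [W, A].  Given
   this, the Leibniz rule [W D, A] = W [D, A] + [W, A] D turns each identity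
   into W [D(V_y), A] = W D(C_y).  Conversely, the column sums of W equal 1,
   so u^T W = u^T: this gives B^T u = 0 for B = [W, A], and, since
   W D(sum_y C_y) = W [1, A] = 0, also sum_y C_y = 0. *)

Section IndependentType.
Variables (R : realFieldType) (d dY : nat).
Implicit Types (W A B D : 'M[R]_d) (V C : 'M[R]_(dY, d)).

Lemma commr_mull W D A : commr (W *m D) A = W *m commr D A + commr W A *m D.
Proof. by rewrite /commr mulmxBr mulmxBl !mulmxA addrC addrA subrK addrC. Qed.

Lemma commr_suml (I : finType) (X : I -> 'M[R]_d) A :
  commr (\sum_i X i) A = \sum_i commr (X i) A.
Proof. by rewrite /commr sumrB mulmx_suml mulmx_sumr. Qed.

Lemma commr1 A : commr 1%:M A = 0.
Proof. by rewrite /commr mul1mx mulmx1 subrr. Qed.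

Lemma sum_row_mx C : \sum_y row y C = \row_j \sum_y C y j.
Proof. by apply/rowP => j; rewrite summxE !mxE; apply: eq_bigr => y _; rewrite mxE. Qed.

Lemma sum_DV V : transition_mx V -> \sum_y DV V y = 1%:M.
Proof.
move=> [_ HV]; rewrite /DV -raddf_sum sum_row_mx -diag_const_mx; congr diag_mx.
by apply/rowP => j; rewrite !mxE HV.
Qed.

Lemma uX_tr_col_stochastic W : col_stochastic W -> (uX R d)^T *m W = (uX R d)^T.
Proof.
move=> [_ HW]; apply/rowP => j; rewrite !mxE -[RHS](HW j).
by apply: eq_bigr => x _; rewrite !mxE mul1r.
Qed.

Lemma uX_tr_mul_diag (v : 'rV[R]_d) : (uX R d)^T *m diag_mx v = v.
Proof. by rewrite mul_mx_diag; apply/rowP => j; rewrite !mxE mul1r. Qed.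

Lemma col_stochastic_mul_diag_eq0 W (v : 'rV[R]_d) :
  col_stochastic W -> W *m diag_mx v = 0 -> v = 0.
Proof.
move=> HW Hv; rewrite -[LHS]uX_tr_mul_diag -(uX_tr_col_stochastic HW).
by rewrite -mulmxA Hv mulmx0.
Qed.

Lemma commr_tr_uX W A :
  col_stochastic W -> A^T *m uX R d = 0 -> (commr W A)^T *m uX R d = 0.
Proof.
move=> HW HA; apply: trmx_inj; rewrite trmx0 trmx_mul trmxK /commr mulmxBr !mulmxA.
have HAu : (uX R d)^T *m A = 0 by rewrite -[A]trmxK -trmx_mul HA trmx0.
by rewrite uX_tr_col_stochastic // HAu mul0mx subr0.
Qed.

Lemma L2_identities_iff W V B C A :
  col_stochastic W -> transition_mx V ->
  (\sum_y row y C = 0 /\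
   forall y, B *m DV V y + W *m diag_mx (row y C) = commr (Wy W V y) A) <->
  (B = commr W A /\
   forall y, W *m commr (DV V y) A = W *m diag_mx (row y C)).
Proof.
move=> HW HV; have HD := sum_DV HV.
have identity_iff : B = commr W A -> forall y,
    B *m DV V y + W *m diag_mx (row y C) = commr (Wy W V y) A <->
    W *m commr (DV V y) A = W *m diag_mx (row y C).
  move=> -> y; rewrite /Wy commr_mull addrC; split => [/addIr|->] //.
split => [[HC HE] | [HB HE]].
- have HB : B = commr W A.
    have : \sum_y (B *m DV V y + W *m diag_mx (row y C)) =
           \sum_y commr (Wy W V y) A by apply: eq_bigr => y _; apply: HE.
    rewrite big_split /= -!mulmx_sumr HD -raddf_sum HC raddf0 mulmx0 addr0 mulmx1.
    by move=> ->; rewrite -commr_suml /Wy -mulmx_sumr HD mulmx1.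
  by split=> // y; apply/(identity_iff HB).
- split=> [|y]; last by apply/(identity_iff HB).
  apply: (col_stochastic_mul_diag_eq0 HW).
  rewrite raddf_sum mulmx_sumr; under eq_bigr do rewrite -HE.
  by rewrite -mulmx_sumr -commr_suml HD commr1 mulmx0.
Qed.

End IndependentType.

Theorem theorem4 (R : realFieldType) (d dY : nat)
  (W : 'M[R]_d) (V : 'M[R]_(dY, d)) (P : 'cV[R]_d) :
  col_stochastic W -> transition_mx V -> irreducible_mx W -> distribution P ->
  (forall (B : 'M[R]_d) (C : 'M[R]_(dY, d)),
     inL2 W V B C <->
     (inGI W V B C /\
      exists A : 'M[R]_d, A^T *m uX R d = 0 /\ B = commr W A /\
        forall y, W *m commr (DV V y) A = W *m diag_mx (row y C)))
  /\
  (forall (B : 'M[R]_d) (C : 'M[R]_(dY, d)),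
     inL2P W V P B C <->
     (inGI W V B C /\
      exists A : 'M[R]_d, A^T *m uX R d = 0 /\ A *m P = 0 /\ B = commr W A /\
        forall y, W *m commr (DV V y) A = W *m diag_mx (row y C))).
Proof.
move=> HW HV _ _; split=> B C; split.
- move=> [[HG [_ HC]] [A [HA HE]]].
  have [HB HE'] := (L2_identities_iff B C A HW HV).1 (conj HC HE).
  by split=> //; exists A.
- move=> [HG [A [HA [HB HE]]]].
  have [HC HE'] := (L2_identities_iff B C A HW HV).2 (conj HB HE).
  split; last by exists A.
  by split=> //; split=> //; rewrite HB; apply: commr_tr_uX.
- move=> [[HG [_ HC]] [A [HA [HP HE]]]].
  have [HB HE'] := (L2_identities_iff B C A HW HV).1 (conj HC HE).
  by split=> //; exists A.
- move=> [HG [A [HA [HP [HB HE]]]]].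
  have [HC HE'] := (L2_identities_iff B C A HW HV).2 (conj HB HE).
  split; last by exists A.
  by split=> //; split=> //; rewrite HB; apply: commr_tr_uX.
Qed.
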